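(* Let $X\subseteq\{1,\dots,n\}$, $x\in X$, and assume $n\geq 2$. Then the sequence of left $\mathcal P_n$-modules \[ 0\longrightarrow\mathcal A_{X,x}\oplus\mathcal B_{X,x}\longrightarrow\mathcal P_n/J_{X-\{x\}}\longrightarrow\mathcal P_n/J_X\longrightarrow 0, \] in which the first map is induced by the inclusions $A_x\subseteq\mathcal P_n$ and $B_{X,x}\subseteq\mathcal P_n$ and the second by the identity of $\mathcal P_n$, is exact (i.e. $\mathcal A_{X,x}\oplus\mathcal B_{X,x}\to\mathcal P_n/J_{X-\{x\}}$ is a resolution of $\mathcal P_n/J_X$). Moreover, applying $\mathbb 1\otimes_{\mathcal P_n}-$ gives a resolution of $\mathbb 1\otimes_{\mathcal P_n}\mathcal P_n/J_X$, i.e. the complex $\mathbb 1\otimes_{\mathcal P_n}(\mathcal A_{X,x}\oplus\mathcal B_{X,x})\to\mathbb 1\otimes_{\mathcal P_n}\mathcal P_n/J_{X-\{x\}}\to\mathbb 1\otimes_{\mathcal P_n}\mathcal P_n/J_X\to 0$ is exact with the leftmost map injective.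
   Context: $R$ is a commutative ring, $\delta\in R$, and $\mathcal P_n=\mathcal P_n(R,\delta)$ is the partition algebra: the free $R$-module on set partitions (''diagrams'') of $\{-n,\dots,-1,1,\dots,n\}$ (negative = left nodes, positive = right nodes), with product by stacking (identifying right nodes of the first diagram with left nodes of the second), taking the induced partition on outer nodes, and multiplying by $\delta$ for each component consisting only of middle nodes. $\mathbb 1$ is the trivial right module $R$ on which permutation diagrams (all blocks of the form $\{-i,j\}$) act as the identity and other diagrams as $0$. For $Z\subseteq\{1,\dots,n\}$, $J_Z$ is the left ideal spanned by diagrams in which among the right nodes labelled by $Z$ there is a singleton block or two distinct nodes in the same block. $A_x$ is the span of diagrams in which the right node $x$ is a singleton; $B_{X,x}$ the span of diagrams in which $x$ is in the same block as another element of $X$; $\mathcal A_{X,x}=A_x/(A_x\cap J_{X-\{x\}})$ and $\mathcal B_{X,x}=B_{X,x}/(B_{X,x}\cap J_{X-\{x\}})$. *)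

From HB Require Import structures.
From mathcomp Require Import all_boot all_order all_algebra.
Set Implicit Arguments. Unset Strict Implicit. Unset Printing Implicit Defensive.
Import GRing.Theory.
Local Open Scope ring_scope.

(* Node convention: left node -(i+1) is [inl i], right node (j+1) is [inr j] *)
(* for i j : 'I_n.  A subset Z of {1..n} is a {set 'I_n} (shifted by one).   *)
Section Diagrams.
Variable n : nat.

Definition node := ('I_n + 'I_n)%type.

Definition diagram := {P : {set {set node}} | partition P [set: node]}.

Definition same_block (d : diagram) (a b : node) : bool := b \in pblock (val d) a.

Definition is_perm_diagram (d : diagram) : bool :=
  [forall B in val d, (#|[set i : 'I_n | inl i \in B]| == 1%N)
                   && (#|[set j : 'I_n | inr j \in B]| == 1%N)].

(* Stacking: nodes of the stacked picture are left nodes of d1 ([inl (inl i)]),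
   middle nodes = right nodes of d1 = left nodes of d2 ([inl (inr i)]),
   and right nodes of d2 ([inr j]). *)
Definition snode := ('I_n + 'I_n + 'I_n)%type.

Definition emb1 (a : node) : snode :=
  match a with inl i => inl (inl i) | inr j => inl (inr j) end.
Definition emb2 (a : node) : snode :=
  match a with inl i => inl (inr i) | inr j => inr j end.
Definition embo (a : node) : snode :=
  match a with inl i => inl (inl i) | inr j => inr j end.
Definition is_middle (w : snode) : bool :=
  match w with inl (inr _) => true | _ => false end.

Definition stack_edge0 (d1 d2 : diagram) (w w' : snode) : bool :=
  [exists a : node, exists b : node,
     [&& emb1 a == w, emb1 b == w' & same_block d1 a b]]
  || [exists a : node, exists b : node,
     [&& emb2 a == w, emb2 b == w' & same_block d2 a b]].

Definition stack_edge (d1 d2 : diagram) : rel snode :=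
  fun w w' => stack_edge0 d1 d2 w w' || stack_edge0 d1 d2 w' w.

Lemma stack_edge_sym d1 d2 : symmetric (stack_edge d1 d2).
Proof. by move=> w w'; rewrite /stack_edge orbC. Qed.

Definition stack_conn (d1 d2 : diagram) : rel snode := connect (stack_edge d1 d2).

Definition outer_rel (d1 d2 : diagram) : rel node :=
  fun a b => stack_conn d1 d2 (embo a) (embo b).

Lemma outer_rel_equiv d1 d2 :
  {in [set: node] & &, equivalence_rel (outer_rel d1 d2)}.
Proof.
move=> a b c _ _ _; split; first exact: connect0.
have sym := sym_connect_sym (@stack_edge_sym d1 d2).
rewrite /outer_rel /stack_conn => Hab; apply/idP/idP => H.
- by apply: connect_trans H; rewrite sym.
- exact: connect_trans Hab H.
Qed.

Definition dcomp (d1 d2 : diagram) : diagram :=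
  exist _ (equivalence_partition (outer_rel d1 d2) [set: node])
          (equivalence_partitionP (outer_rel_equiv d1 d2)).

Definition dloops (d1 d2 : diagram) : nat :=
  #|[set C in equivalence_partition (stack_conn d1 d2) [set: snode]
     | [forall w in C, is_middle w]]|.

Definition J_set (Z : {set 'I_n}) (d : diagram) : bool :=
  [exists z in Z, [set inr z] \in val d]
  || [exists z1 in Z, exists z2 in Z, (z1 != z2) && same_block d (inr z1) (inr z2)].

Definition A_set (x : 'I_n) (d : diagram) : bool := [set inr x] \in val d.

Definition B_set (X : {set 'I_n}) (x : 'I_n) (d : diagram) : bool :=
  [exists y in X, (y != x) && same_block d (inr x) (inr y)].

End Diagrams.

Section PartitionAlgebra.
Variables (R : comPzRingType) (delta : R) (n : nat).

Definition palg := {ffun diagram n -> R^o}.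

Definition pmul (f g : palg) : palg :=
  [ffun d => \sum_(d1 : diagram n) \sum_(d2 : diagram n)
     (if dcomp d1 d2 == d then f d1 * g d2 * delta ^+ dloops d1 d2 else 0)].

(* the trivial right module 1: the augmentation R-linear map P_n -> R *)
Definition paug (f : palg) : R := \sum_(d : diagram n | is_perm_diagram d) f d.

Definition dspan (S : pred (diagram n)) (f : palg) : Prop :=
  forall d, f d != 0 -> S d.

Definition Jmod (Z : {set 'I_n}) : palg -> Prop := dspan (J_set Z).
Definition Amod (x : 'I_n) : palg -> Prop := dspan (A_set x).
Definition Bmod (X : {set 'I_n}) (x : 'I_n) : palg -> Prop := dspan (B_set X x).

Definition pmul2 (p : palg) (v : palg * palg) : palg * palg :=
  (pmul p v.1, pmul p v.2).

End PartitionAlgebra.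

(* Modules are subquotients M/N with N, M predicates on an ambient module.  *)
Section Modules.
Variables (R : comPzRingType) (A : Type) (aug : A -> R).
Variables (V : lmodType R) (act : A -> V -> V).

Definition Rspan (S : V -> Prop) (v : V) : Prop :=
  exists k (c : 'I_k -> R) (w : 'I_k -> V),
    (forall i, S (w i)) /\ v = \sum_(i < k) c i *: w i.

Definition is_left_submodule (M : V -> Prop) : Prop :=
  [/\ M 0, (forall u v, M u -> M v -> M (u + v)),
      (forall (r : R) v, M v -> M (r *: v)) & (forall p v, M v -> M (act p v))].

(* 1 (x)_A (M/N) = (M/N) / span{ p.m - aug(p) m }, i.e. the subquotient
   M / (N + span{ p.m - aug(p) m : m in M }) *)
Definition triv_rel (M : V -> Prop) : V -> Prop :=
  Rspan (fun v => exists p m, M m /\ v = act p m - aug p *: m).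

Definition triv_tensor_bot (M N : V -> Prop) : V -> Prop :=
  fun v => exists u w, N u /\ triv_rel M w /\ v = u + w.

End Modules.

(* Exactness of 0 -> M1/N1 -f-> M2/N2 -g-> M3/N3 -> 0, the maps being
   induced by f and g on the ambient modules. *)
Definition sq_short_exact {V1 V2 V3 : zmodType}
  (M1 N1 : V1 -> Prop) (M2 N2 : V2 -> Prop) (M3 N3 : V3 -> Prop)
  (f : V1 -> V2) (g : V2 -> V3) : Prop :=
  [/\ (forall v, M1 v -> M2 (f v)) /\ (forall v, N1 v -> N2 (f v)),
      (forall v, M2 v -> M3 (g v)) /\ (forall v, N2 v -> N3 (g v)),
      (* injectivity of M1/N1 -> M2/N2 *)
      (forall v, M1 v -> N2 (f v) -> N1 v),
      (* exactness in the middle: im = ker *)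
      (forall v, M1 v -> N3 (g (f v))) /\
      (forall w, M2 w -> N3 (g w) -> exists v, M1 v /\ N2 (f v - w))
    & (* surjectivity of M2/N2 -> M3/N3 *)
      (forall w, M3 w -> exists v, M2 v /\ N3 (g v - w))].

Section Prop46Data.
Variables (R : comPzRingType) (n : nat) (X : {set 'I_n}) (x : 'I_n).

Definition sum_top : palg R n * palg R n -> Prop :=
  fun v => Amod x v.1 /\ Bmod X x v.2.
Definition sum_bot : palg R n * palg R n -> Prop :=
  fun v => (Amod x v.1 /\ Jmod (X :\ x) v.1) /\ (Bmod X x v.2 /\ Jmod (X :\ x) v.2).

Definition sum_map (v : palg R n * palg R n) : palg R n := v.1 + v.2.

Definition all_palg : palg R n -> Prop := fun _ => True.
End Prop46Data.

From HB Require Import structures.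
From mathcomp Require Import all_boot all_order all_algebra.
Import GRing.Theory.
Set Implicit Arguments. Unset Strict Implicit. Unset Printing Implicit Defensive.

(* The sets A_x, B_{X,x} and J_Z of diagrams are defined by how the right nodes
   are grouped, and stacking a diagram on the left never separates right nodes
   nor attaches anything to a singleton right node, so their spans are left
   ideals.  A_x and B_{X,x} are disjoint, both lie in J_X, and a diagram of J_X
   in neither of them lies in J_{X-x}; exactness of the first sequence is then
   bookkeeping in the diagram basis.  After applying 1 (x) -, the whole of
   A_{X,x} (+) B_{X,x} dies: every d in A_x (resp. B_{X,x}) satisfies d = d m
   without loops for an explicit m in A_x (resp. B_{X,x}) (built from a second
   node y, hence n >= 2), and d is not a permutation, so d = d.m - aug(d) m is
   one of the defining relations.  The same bookkeeping then identifies
   1 (x) P_n/J_{X-x} with 1 (x) P_n/J_X. *)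

Lemma connect_sub_preorder (T : finType) (e Q : rel T) :
  reflexive Q -> transitive Q -> subrel e Q -> subrel (connect e) Q.
Proof.
move=> Qr Qt eQ a b /connectP [p + ->]; elim: p a => //= c p IH a.
by case/andP => /eQ ac /IH cb; apply: Qt ac cb.
Qed.

Section DiagramCombinatorics.
Variable n : nat.
Implicit Types (d m : diagram n) (a b : node n).

Lemma cover_diagram d a : a \in cover (val d).
Proof. by rewrite (cover_partition (valP d)) inE. Qed.

Lemma trivIset_diagram d : trivIset (val d).
Proof. exact: partition_trivIset (valP d). Qed.

Lemma same_blockE d a b : same_block d a b = (pblock (val d) a == pblock (val d) b).
Proof. by rewrite eq_pblock ?cover_diagram ?trivIset_diagram. Qed.

Lemma same_block_refl d : reflexive (same_block d).
Proof. by move=> a; rewrite same_blockE. Qed.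

Lemma same_block_sym d : symmetric (same_block d).
Proof. by move=> a b; rewrite !same_blockE eq_sym. Qed.

Lemma same_block_trans d : transitive (same_block d).
Proof. by move=> b a c; rewrite !same_blockE => /eqP->. Qed.

Lemma A_setP x d :
  reflect (forall b, same_block d (inr x) b -> b = inr x) (A_set x d).
Proof.
apply: (iffP idP) => [Ax b | x_alone].
  by rewrite /same_block (def_pblock (trivIset_diagram d) Ax (set11 _)) inE => /eqP.
rewrite /A_set; have -> : [set inr x] = pblock (val d) (inr x).
  apply/setP => b; rewrite inE; apply/eqP/idP => [-> | /x_alone //].
  by rewrite mem_pblock cover_diagram.
by rewrite pblock_mem ?cover_diagram.
Qed.

Definition preim_diagram (f : node n -> option 'I_n) : diagram n :=
  exist _ (preim_partition f [set: node n]) (preim_partitionP f [set: node n]).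

Lemma same_block_preim_diagram f a b :
  same_block (preim_diagram f) a b = (f a == f b).
Proof.
rewrite /same_block /= /preim_partition pblock_equivalence_partition ?inE //.
by move=> u v w _ _ _; split=> // /eqP->.
Qed.

Lemma stack_edgeP d1 d2 w w' : stack_edge d1 d2 w w' ->
  (exists a b, [/\ w = emb1 a, w' = emb1 b & same_block d1 a b]) \/
  (exists a b, [/\ w = emb2 a, w' = emb2 b & same_block d2 a b]).
Proof.
rewrite /stack_edge /stack_edge0.
case/orP => /orP [] /existsP [a /existsP [b /and3P [/eqP <- /eqP <- ab]]].
- by left; exists a, b.
- by right; exists a, b.
- by left; exists b, a; rewrite same_block_sym.
- by right; exists b, a; rewrite same_block_sym.
Qed.

Lemma stack_edge_emb1 d1 d2 a b :
  same_block d1 a b -> stack_edge d1 d2 (emb1 a) (emb1 b).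
Proof.
move=> ab; apply/orP; left; apply/orP; left.
by apply/existsP; exists a; apply/existsP; exists b; rewrite !eqxx ab.
Qed.

Lemma stack_edge_emb2 d1 d2 a b :
  same_block d2 a b -> stack_edge d1 d2 (emb2 a) (emb2 b).
Proof.
move=> ab; apply/orP; left; apply/orP; right.
by apply/existsP; exists a; apply/existsP; exists b; rewrite !eqxx ab.
Qed.

Lemma same_block_dcomp d1 d2 a b :
  same_block (dcomp d1 d2) a b = connect (stack_edge d1 d2) (embo a) (embo b).
Proof.
by rewrite /same_block /= pblock_equivalence_partition ?inE //; apply: outer_rel_equiv.
Qed.

Lemma A_set_dcomp x d1 d2 : A_set x d2 -> A_set x (dcomp d1 d2).
Proof.
move/A_setP => x_alone; apply/A_setP => b; rewrite same_block_dcomp.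
pose Q := [rel w w' : snode n | (w == inr x) ==> (w' == inr x)].
have Qr : reflexive Q by move=> w; apply/implyP.
have Qt : transitive Q.
  by move=> w2 w1 w3 /=; case: (w1 == _); case: (w2 == _); case: (w3 == _).
have eQ : subrel (stack_edge d1 d2) Q.
  move=> w w' /stack_edgeP [[a [c [-> -> _]]] | [a [c [-> -> ac]]]] /=; first by case: a.
  case: a ac => [i|j] ac //=; apply/implyP => /eqP [ej]; subst j.
  by rewrite (x_alone _ ac).
move/(connect_sub_preorder Qr Qt eQ); rewrite /= eqxx /=.
by case: b => //= j /eqP [->].
Qed.

Lemma same_block_dcomp_right d1 d2 j k :
  same_block d2 (inr j) (inr k) -> same_block (dcomp d1 d2) (inr j) (inr k).
Proof.
by move=> jk; rewrite same_block_dcomp; apply: connect1; apply: (stack_edge_emb2 d1 jk).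
Qed.

Lemma J_set_dcomp Z d1 d2 : J_set Z d2 -> J_set Z (dcomp d1 d2).
Proof.
case/orP => [/existsP [z /andP [zZ Az]] | /existsP [z1 /andP [z1Z]]].
  by apply/orP; left; apply/existsP; exists z; rewrite zZ; exact: A_set_dcomp.
case/existsP => z2 /andP [z2Z /andP [z12 same]].
apply/orP; right; apply/existsP; exists z1; rewrite z1Z; apply/existsP; exists z2.
by rewrite z2Z z12 (same_block_dcomp_right d1 same).
Qed.

Lemma B_set_dcomp X x d1 d2 : B_set X x d2 -> B_set X x (dcomp d1 d2).
Proof.
case/existsP => y /andP [yX /andP [yx same]]; apply/existsP; exists y.
by rewrite yX yx (same_block_dcomp_right d1 same).
Qed.

Definition stack_proj (pm : 'I_n -> node n) (w : snode n) : node n :=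
  match w with inl (inl i) => inl i | inl (inr i) => pm i | inr j => inr j end.

(* If retracting the stacked picture onto the nodes of [d] (middle node i going
   to [pm i]) respects the blocks of [d], stacking [m] merges no blocks of [d]. *)
Lemma dcomp_eq_left d m (pm : 'I_n -> node n) :
  (forall a b, same_block d a b ->
     same_block d (stack_proj pm (emb1 a)) (stack_proj pm (emb1 b))) ->
  (forall a b, same_block m a b ->
     same_block d (stack_proj pm (emb2 a)) (stack_proj pm (emb2 b))) ->
  (forall a b, same_block d a b -> outer_rel d m a b) -> dcomp d m = d.
Proof.
move=> proj_d proj_m d_outer; apply: val_inj.
rewrite /= -[RHS](equivalence_partition_pblock (valP d)) /equivalence_partition.
apply: eq_imset => a; apply/setP => b; rewrite !inE /=.
apply/idP/idP => [ab|]; last exact: d_outer.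
pose Q := [rel w w' | same_block d (stack_proj pm w) (stack_proj pm w')].
have Qr : reflexive Q by move=> w; apply: same_block_refl.
have Qt : transitive Q by move=> v u w; apply: same_block_trans.
have eQ : subrel (stack_edge d m) Q.
  by move=> u v /stack_edgeP [[a' [b' [-> -> ab']]] | [a' [b' [-> -> ab']]]];
    [apply: proj_d | apply: proj_m].
by have := connect_sub_preorder Qr Qt eQ ab; case: a {ab}; case: b.
Qed.

Lemma dloops_eq0 d m :
  (forall i, exists j, same_block m (inl i) (inr j)) -> dloops d m = 0%N.
Proof.
move=> middle_exits; apply/eqP; rewrite cards_eq0; apply/eqP/setP => C; rewrite !inE.
case CP: (C \in _) => //=; move/imsetP: CP => [w _ ->].
apply/negbTE/negP => /forallP all_middle.
have [w' [ww' outer_w']] : exists w', stack_conn d m w w' /\ ~~ is_middle w'.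
  case: w {all_middle} => [[i|i]|j].
  - by exists (inl (inl i)); split; [exact: connect0 | by []].
  - have [j ij] := middle_exits i; exists (inr j); split => //.
    exact/connect1/(stack_edge_emb2 d ij).
  - by exists (inr j); split; [exact: connect0 | by []].
by move: (all_middle w'); rewrite !inE ww' /= (negbTE outer_w').
Qed.

Lemma outer_rel_same_block d m (good : pred (node n)) :
  (forall j, good (inr j) -> same_block m (inl j) (inr j)) ->
  forall a b, good a -> good b -> same_block d a b -> outer_rel d m a b.
Proof.
move=> good_through.
have sym := sym_connect_sym (@stack_edge_sym n d m).
have to_outer a : good a -> stack_conn d m (emb1 a) (embo a).
  case: a => [i|j] ga; first exact: connect0.
  exact/connect1/(stack_edge_emb2 d (good_through j ga)).
move=> a b ga gb ab; rewrite /outer_rel /stack_conn.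
apply: connect_trans (to_outer _ gb); apply: connect_trans (connect1 (stack_edge_emb1 m ab)).
by rewrite sym; apply: to_outer.
Qed.

End DiagramCombinatorics.

Section RightIdentities.
Variables (n : nat) (x y : 'I_n).
Hypothesis yx : y != x.
Implicit Type d : diagram n.

Definition redirect (i : 'I_n) : 'I_n := if i == x then y else i.

Lemma redirect_id j : j != x -> redirect j = j.
Proof. by rewrite /redirect => /negbTE ->. Qed.

Lemma redirect_neq i : redirect i != x.
Proof. by rewrite /redirect; case: (i =P x) => [_|/eqP]. Qed.

(* Both diagrams are the identity except around x: [A_rid] makes the right node
   x a singleton, [B_rid] puts both nodes x into the block of y; in each, the
   left node x joins the block of y. *)
Definition A_rid : diagram n := preim_diagram
  (fun a => match a with
            | inl i => Some (redirect i)
            | inr j => if j == x then None else Some j end).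

Definition B_rid : diagram n := preim_diagram
  (fun a => match a with inl i => Some (redirect i) | inr j => Some (redirect j) end).

Lemma A_set_A_rid : A_set x A_rid.
Proof.
apply/A_setP => b; rewrite same_block_preim_diagram /= eqxx.
by case: b => [i|j] //=; case: (j =P x) => [->|].
Qed.

Lemma B_set_B_rid (X : {set 'I_n}) : y \in X -> B_set X x B_rid.
Proof.
move=> yX; apply/existsP; exists y.
by rewrite yX yx same_block_preim_diagram /= /redirect eqxx (negbTE yx).
Qed.

Lemma dloops_A_rid d : dloops d A_rid = 0%N.
Proof.
apply: dloops_eq0 => i; exists (redirect i).
by rewrite same_block_preim_diagram /= (negbTE (redirect_neq i)).
Qed.

Lemma dloops_B_rid d : dloops d B_rid = 0%N.
Proof. by apply: dloops_eq0 => i; exists i; rewrite same_block_preim_diagram. Qed.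

Lemma dcomp_A_rid d : A_set x d -> dcomp d A_rid = d.
Proof.
move/A_setP => x_alone.
have not_x a b : a != inr x -> same_block d a b -> b != inr x.
  move=> ax ab; apply: contraNneq ax => bx.
  by apply/eqP/x_alone; rewrite same_block_sym -bx.
apply: (dcomp_eq_left (pm := fun i => inr (redirect i))).
- move=> a b ab; have [/eqP ax | ax] := boolP (a == inr x).
    by rewrite ax in ab *; rewrite (x_alone _ ab); apply: same_block_refl.
  have bx := not_x _ _ ax ab.
  have proj_emb1 c : c != inr x -> stack_proj (fun i => inr (redirect i)) (emb1 c) = c.
    by case: c => [i|j] //= jx; rewrite redirect_id //; apply: contraNneq jx => ->.
  by rewrite !proj_emb1.
- move=> a b; rewrite same_block_preim_diagram => /eqP.
  case: a b => [i|j] [i'|j'] /=.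
  + by move=> [->]; apply: same_block_refl.
  + by case: eqP => // _ [->]; apply: same_block_refl.
  + by case: eqP => // _ [->]; apply: same_block_refl.
  + case: eqP => [->|_]; case: eqP => [->|_] //; first by move=> _; apply: same_block_refl.
    by move=> [->]; apply: same_block_refl.
- move=> a b ab; have [/eqP ax | ax] := boolP (a == inr x).
    by rewrite ax in ab *; rewrite (x_alone _ ab); apply: connect0.
  apply: (outer_rel_same_block (good := fun c => c != inr x)) => //; last exact: not_x ab.
  move=> j /= jx; have {}jx : j != x by apply: contraNneq jx => ->.
  by rewrite same_block_preim_diagram /= redirect_id // (negbTE jx).
Qed.

Lemma dcomp_B_rid d : same_block d (inr x) (inr y) -> dcomp d B_rid = d.
Proof.
move=> xy; apply: (dcomp_eq_left (pm := fun i => inr i)).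
- by move=> a b; case: a; case: b.
- have redirect_same k k' : redirect k = redirect k' -> same_block d (inr k) (inr k').
    rewrite /redirect; case: eqP => [->|_]; case: eqP => [->|_] //.
    + by move=> _; apply: same_block_refl.
    + by move=> <-.
    + by move=> ->; rewrite same_block_sym.
    + by move=> ->; apply: same_block_refl.
  move=> a b; rewrite same_block_preim_diagram => /eqP.
  by case: a b => [i|j] [i'|j'] /= [/redirect_same].
- move=> a b ab; apply: (outer_rel_same_block (good := predT)) => // j _.
  by rewrite same_block_preim_diagram.
Qed.

End RightIdentities.

Section DiagramSets.
Variables (n : nat) (X : {set 'I_n}) (x : 'I_n).
Hypothesis xX : x \in X.
Implicit Type d : diagram n.

Lemma A_set_notB d : A_set x d -> ~~ B_set X x d.
Proof.
move/A_setP => x_alone; apply/existsP => [[y /andP [_ /andP [yx /x_alone [yx']]]]].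
by rewrite yx' eqxx in yx.
Qed.

Lemma A_set_J d : A_set x d -> J_set X d.
Proof. by move=> Ax; apply/orP; left; apply/existsP; exists x; rewrite xX. Qed.

Lemma B_set_J d : B_set X x d -> J_set X d.
Proof.
case/existsP => y /andP [yX /andP [yx xy]]; apply/orP; right.
apply/existsP; exists x; rewrite xX; apply/existsP; exists y.
by rewrite yX eq_sym yx xy.
Qed.

Lemma J_set_subset (Z1 Z2 : {set 'I_n}) d : Z1 \subset Z2 -> J_set Z1 d -> J_set Z2 d.
Proof.
move/subsetP => sZ; case/orP => [/existsP [z /andP [zZ Az]] | /existsP [z1 /andP [z1Z]]].
  by apply/orP; left; apply/existsP; exists z; rewrite (sZ _ zZ).
case/existsP => z2 /andP [z2Z same]; apply/orP; right.
by apply/existsP; exists z1; rewrite (sZ _ z1Z); apply/existsP; exists z2; rewrite (sZ _ z2Z).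
Qed.

Lemma J_set_split d :
  J_set X d -> ~~ A_set x d -> ~~ B_set X x d -> J_set (X :\ x) d.
Proof.
move=> Jd nA nB.
have notB y : y \in X -> y != x -> ~~ same_block d (inr x) (inr y).
  by move=> yX yx; apply: contra nB => xy; apply/existsP; exists y; rewrite yX yx.
case/orP: Jd => [/existsP [z /andP [zX Az]] | /existsP [z1 /andP [z1X]]].
  apply/orP; left; apply/existsP; exists z; rewrite !inE zX Az !andbT.
  by apply: contraNneq nA => <-.
case/existsP => z2 /andP [z2X /andP [z12 same]].
have z1x : z1 != x.
  by apply: contraTneq same => z1x; subst z1; apply: notB; rewrite // eq_sym.
have z2x : z2 != x.
  by apply: contraTneq same => z2x; subst z2; rewrite same_block_sym; apply: notB.
apply/orP; right; apply/existsP; exists z1; rewrite !inE z1x z1X.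
by apply/existsP; exists z2; rewrite !inE z2x z2X z12 same.
Qed.

Lemma A_set_not_perm d : A_set x d -> ~~ is_perm_diagram d.
Proof.
move=> Ax; apply/negP => /forallP /(_ [set inr x]); rewrite (Ax : _ \in _) /=.
have -> : [set i : 'I_n | inl i \in [set (inr x : node n)]] = set0.
  by apply/setP => i; rewrite !inE.
by rewrite cards0.
Qed.

Lemma B_set_not_perm d : B_set X x d -> ~~ is_perm_diagram d.
Proof.
case/existsP => y /andP [_ /andP [yx xy]]; apply/negP => /forallP.
move/(_ (pblock (val d) (inr x))); rewrite pblock_mem ?cover_diagram //= => /andP [_ /eqP c1].
have : [set x; y] \subset [set j : 'I_n | inr j \in pblock (val d) (inr x)].
  apply/subsetP => j; rewrite !inE => /orP [] /eqP ->; last exact: xy.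
  by rewrite mem_pblock cover_diagram.
by move/subset_leq_card; rewrite c1 cards2 eq_sym yx.
Qed.

End DiagramSets.

Local Open Scope ring_scope.

Section RspanTheory.
Variables (R : comPzRingType) (V : lmodType R) (S : V -> Prop).

Lemma Rspan0 : Rspan S 0.
Proof. by exists 0%N, (fun _ => 0), (fun _ => 0); split => [[]//|]; rewrite big_ord0. Qed.

Lemma Rspan_gen v : S v -> Rspan S v.
Proof.
by move=> Sv; exists 1%N, (fun _ => 1), (fun _ => v); split => //; rewrite big_ord1 scale1r.
Qed.

Lemma RspanD u v : Rspan S u -> Rspan S v -> Rspan S (u + v).
Proof.
move=> [k1 [c1 [w1 [S1 ->]]]] [k2 [c2 [w2 [S2 ->]]]].
exists (k1 + k2)%N, (fun i => match split i with inl a => c1 a | inr b => c2 b end),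
  (fun i => match split i with inl a => w1 a | inr b => w2 b end); split.
  by move=> i; case: (split i).
rewrite big_split_ord /=; congr (_ + _); apply: eq_bigr => i _.
  by rewrite (unsplitK (inl _)).
by rewrite (unsplitK (inr _)).
Qed.

Lemma RspanZ r v : Rspan S v -> Rspan S (r *: v).
Proof.
move=> [k [c [w [Sw ->]]]]; exists k, (fun i => r * c i), w; split => //.
by rewrite scaler_sumr; apply: eq_bigr => i _; rewrite scalerA.
Qed.

Lemma Rspan_sum (I : finType) (F : I -> V) :
  (forall i, Rspan S (F i)) -> Rspan S (\sum_i F i).
Proof. by move=> SF; apply: big_ind => //; [exact: Rspan0 | exact: RspanD]. Qed.

Lemma Rspan_map (W : lmodType R) (T : W -> Prop) (f : {linear V -> W}) :
  (forall v, S v -> T (f v)) -> forall v, Rspan S v -> Rspan T (f v).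
Proof.
move=> fST v [k [c [w [Sw ->]]]]; exists k, c, (fun i => f (w i)); split.
  by move=> i; apply: fST.
by rewrite linear_sum; apply: eq_bigr => i _; rewrite linearZ.
Qed.

End RspanTheory.

Lemma fst_sum (V W : nmodType) (I : finType) (F : I -> V * W) :
  (\sum_i F i).1 = \sum_i (F i).1.
Proof. exact: (big_morph fst). Qed.

Lemma snd_sum (V W : nmodType) (I : finType) (F : I -> V * W) :
  (\sum_i F i).2 = \sum_i (F i).2.
Proof. exact: (big_morph snd). Qed.

Section DiagramBasis.
Variables (R : comPzRingType) (delta : R) (n : nat).
Local Notation P := (palg R n).
Local Notation pmul := (@pmul R delta n).
Implicit Types (S : pred (diagram n)) (d m : diagram n) (f g p : P).

(* Locked: otherwise comparing [pdiag d] with [pdiag d'] during rewriting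
   unfolds the enumeration of all diagrams. *)
Fact pdiag_key : unit. Proof. by []. Qed.
Definition pdiag_def d : P := [ffun e => (e == d)%:R].
Definition pdiag := locked_with pdiag_key pdiag_def.

Lemma pdiagE d e : pdiag d e = (e == d)%:R.
Proof. by rewrite /pdiag locked_withE /pdiag_def ffunE. Qed.

Lemma pdiag_id d : pdiag d d = 1.
Proof. by rewrite pdiagE eqxx. Qed.

Lemma pdiag_neq d d' : d' != d -> pdiag d d' = 0.
Proof. by rewrite pdiagE => /negbTE ->. Qed.

Lemma palg_expand f : f = \sum_d f d *: pdiag d.
Proof.
apply/ffunP => e; rewrite sum_ffunE (bigD1 e) //= big1 => [|d ed].
  by rewrite ffunE pdiag_id [_ *: _]mulr1 addr0.
by rewrite eq_sym in ed; rewrite ffunE (pdiag_neq ed) [_ *: _]mulr0.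
Qed.

Lemma pmulDr p f g : pmul p (f + g) = pmul p f + pmul p g.
Proof.
apply/ffunP => e; rewrite !ffunE -big_split; apply: eq_bigr => d1 _.
rewrite -big_split; apply: eq_bigr => d2 _ /=; rewrite ffunE.
by case: ifP => _; rewrite ?addr0 // mulrDr mulrDl.
Qed.

Lemma pmul0r p : pmul p 0 = 0.
Proof.
apply/ffunP => e; rewrite !ffunE big1 // => d1 _; rewrite big1 // => d2 _.
by rewrite ffunE mulr0 mul0r; case: ifP.
Qed.

Lemma pmul_pdiag d m : dloops d m = 0%N -> pmul (pdiag d) (pdiag m) = pdiag (dcomp d m).
Proof.
move=> no_loops; apply/ffunP => e; rewrite [LHS]ffunE.
rewrite (big_only1 d) => [|//|d1 d1d _]; last first.
  by apply: big1 => d2 _; rewrite (pdiag_neq d1d) !mul0r if_same.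
rewrite (big_only1 m) => [|//|d2 d2m _]; last first.
  by rewrite (pdiag_neq d2m) mulr0 mul0r if_same.
by rewrite !pdiag_id no_loops expr0 !mulr1 pdiagE eq_sym; case: eqP.
Qed.

Lemma paug_pdiag d : ~~ is_perm_diagram d -> paug (pdiag d) = 0.
Proof.
move=> not_perm; apply: big1 => d' perm_d'; rewrite pdiagE; case: eqP => // d'd.
by rewrite -d'd perm_d' in not_perm.
Qed.

Lemma pair_pdiag_expand (f g : P) :
  (f, g) = \sum_d (f d *: (pdiag d, 0) + g d *: (0, pdiag d)).
Proof.
apply: injective_projections; rewrite /= ?fst_sum ?snd_sum /=.
  by rewrite [LHS]palg_expand; apply: eq_bigr => d _ /=; rewrite scaler0 addr0.
by rewrite [LHS]palg_expand; apply: eq_bigr => d _ /=; rewrite scaler0 add0r.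
Qed.

Lemma dspan0 S : dspan S (0 : P).
Proof. by move=> d; rewrite ffunE eqxx. Qed.

Lemma dspanD S f g : dspan S f -> dspan S g -> dspan S (f + g).
Proof.
move=> Sf Sg d; rewrite ffunE; have [f0|/Sf //] := eqVneq (f d) 0.
by rewrite f0 add0r; apply: Sg.
Qed.

Lemma dspanZ S r f : dspan S f -> dspan S (r *: f).
Proof.
move=> Sf d; rewrite ffunE; have [f0|/Sf //] := eqVneq (f d) 0.
by rewrite f0 [_ *: _]mulr0 eqxx.
Qed.

Lemma dspanW (S1 S2 : pred (diagram n)) f :
  (forall d, S1 d -> S2 d) -> dspan S1 f -> dspan S2 f.
Proof. by move=> S12 S1f d /S1f /S12. Qed.

Lemma dspan_pdiag S d : S d -> dspan S (pdiag d).
Proof. by move=> Sd e; rewrite pdiagE; case: (e =P d) => [->|] //; rewrite eqxx. Qed.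

Definition dproj S f : P := [ffun d => if S d then f d else 0].

Lemma dspan_dproj S f : dspan S (dproj S f).
Proof. by move=> d; rewrite ffunE; case: (S d); rewrite ?eqxx. Qed.

Lemma dspan_left_submodule S :
  (forall d1 d2, S d2 -> S (dcomp d1 d2)) -> is_left_submodule pmul (dspan S).
Proof.
move=> S_dcomp; split; [exact: dspan0 | exact: dspanD | exact: dspanZ |].
move=> p f Sf e; rewrite ffunE; apply: contraNT => notS; apply/eqP.
apply: big1 => d1 _; apply: big1 => d2 _; case: eqP => // de.
have [f0|/Sf Sd2] := eqVneq (f d2) 0; first by rewrite f0 mulr0 mul0r.
by rewrite -de S_dcomp in notS.
Qed.

End DiagramBasis.

Lemma exists_neq n (i : 'I_n) : (1 < n)%N -> exists j : 'I_n, j != i.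
Proof.
move=> n_gt1; pose j0 := Ordinal (ltnW n_gt1); pose j1 := Ordinal n_gt1.
have [ij0|] := eqVneq i j0; last by exists j0; rewrite eq_sym.
by exists j1; rewrite ij0.
Qed.

Section Proposition46.
Variables (R : comPzRingType) (delta : R) (n : nat) (X : {set 'I_n}) (x : 'I_n).
Hypotheses (n_gt1 : (1 < n)%N) (xX : x \in X).
Local Notation P := (palg R n).
Local Notation pmul := (@pmul R delta n).
Local Notation J := (@Jmod R n).
Local Notation all := (@all_palg R n).
Local Notation top := (@sum_top R n X x).
Local Notation bot := (@sum_bot R n X x).
Local Notation top_rel := (triv_rel (@paug R n) (@pmul2 R delta n) top).
Local Notation tensor_bot Z := (triv_tensor_bot (@paug R n) pmul all (J Z)).

Lemma sum_map_is_linear : linear (@sum_map R n).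
Proof. by move=> c u v; rewrite /sum_map /= scalerDr addrACA. Qed.

HB.instance Definition _ := GRing.isLinear.Build R (P * P)%type P _ (@sum_map R n)
  sum_map_is_linear.

Lemma diagram_left_ideals :
  [/\ is_left_submodule pmul (@Amod R n x), is_left_submodule pmul (@Bmod R n X x),
      is_left_submodule pmul (J X) & is_left_submodule pmul (J (X :\ x))].
Proof.
split; apply: dspan_left_submodule => d1 d2.
- exact: A_set_dcomp.
- exact: B_set_dcomp.
- exact: J_set_dcomp.
- exact: J_set_dcomp.
Qed.

Lemma Jmod_delete f : J (X :\ x) f -> J X f.
Proof. by apply: dspanW => d; apply: J_set_subset; apply: subsetDl. Qed.

Lemma sum_top_J v : top v -> J X (sum_map v).
Proof.
case=> Av Bv; apply: dspanD; first exact: dspanW (A_set_J xX) Av.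
exact: dspanW (B_set_J xX) Bv.
Qed.

Definition split_AB (f : P) : P * P := (dproj (A_set x) f, dproj (B_set X x) f).

Lemma sum_top_split f : top (split_AB f).
Proof. by split; apply: dspan_dproj. Qed.

Lemma J_split_AB f : J X f -> J (X :\ x) (sum_map (split_AB f) - f).
Proof.
move=> Jf d; rewrite /sum_map /split_AB /= !ffunE.
have [Ad|nA] := boolP (A_set x d).
  by rewrite (negbTE (A_set_notB X Ad)) addr0 subrr eqxx.
have [Bd|nB] := boolP (B_set X x d); first by rewrite add0r subrr eqxx.
by rewrite add0r sub0r oppr_eq0 => /Jf Jd; apply: J_set_split.
Qed.

Lemma sum_bot_of_J v : top v -> J (X :\ x) (sum_map v) -> bot v.
Proof.
move: v => [v1 v2] [Av1 Bv2] /= Jv; split; split => // d vd.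
  have v2d : v2 d = 0 by apply/eqP; apply: contraNT (Bv2 d) (A_set_notB X (Av1 _ vd)).
  by apply: Jv; rewrite ffunE v2d addr0.
have v1d : v1 d = 0.
  by apply/eqP; apply: contraNT (Av1 d) (contraTN (@A_set_notB _ X _ _) (Bv2 _ vd)).
by apply: Jv; rewrite ffunE v1d add0r.
Qed.

Lemma quotient_short_exact :
  sq_short_exact top bot all (J (X :\ x)) all (J X) (@sum_map R n) id.
Proof.
split.
- by split => // v [[_ J1] [_ J2]]; apply: dspanD.
- by split => //; apply: Jmod_delete.
- exact: sum_bot_of_J.
- split; first exact: sum_top_J.
  by move=> w _ Jw; exists (split_AB w); split; [apply: sum_top_split | apply: J_split_AB].
- by move=> w _; exists w; split => //; rewrite subrr; apply: dspan0.
Qed.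

Lemma triv_rel_sum_map v : top_rel v -> triv_rel (@paug R n) pmul all (sum_map v).
Proof.
apply: (Rspan_map (f := @sum_map R n)) => _ [p [m [_ ->]]].
exists p, (sum_map m); split => //.
by rewrite /sum_map /pmul2 /= pmulDr scalerDr opprD addrACA.
Qed.

Lemma tensor_bot_delete w : tensor_bot (X :\ x) w -> tensor_bot X w.
Proof. by case=> u [t [Ju [Tt ->]]]; exists u, t; split => //; apply: Jmod_delete. Qed.

Lemma triv_rel_A d : A_set x d -> top_rel (pdiag R d, 0).
Proof.
move=> Ad; have [y yx] := exists_neq x n_gt1.
apply: Rspan_gen; exists (pdiag R d), (pdiag R (A_rid x y), 0); split.
  by split; [apply/dspan_pdiag/A_set_A_rid | apply: dspan0].
rewrite (paug_pdiag R (A_set_not_perm Ad)) scale0r subr0 /pmul2 /= pmul0r.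
by rewrite pmul_pdiag (dcomp_A_rid, dloops_A_rid).
Qed.

Lemma triv_rel_B d : B_set X x d -> top_rel (0, pdiag R d).
Proof.
move=> Bd; have /existsP [y /andP [yX /andP [yx xy]]] := Bd.
apply: Rspan_gen; exists (pdiag R d), (0, pdiag R (B_rid x y)); split.
  by split; [apply: dspan0 | apply/dspan_pdiag/B_set_B_rid].
rewrite (paug_pdiag R (B_set_not_perm Bd)) scale0r subr0 /pmul2 /= pmul0r.
by rewrite pmul_pdiag (dcomp_B_rid, dloops_B_rid).
Qed.

Lemma triv_rel_top v : top v -> top_rel v.
Proof.
move: v => [v1 v2] [Av1 Bv2]; rewrite pair_pdiag_expand.
apply: Rspan_sum => d; apply: RspanD.
  have [->|/Av1 Ad] := eqVneq (v1 d) 0; first by rewrite scale0r; apply: Rspan0.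
  exact/RspanZ/triv_rel_A.
have [->|/Bv2 Bd] := eqVneq (v2 d) 0; first by rewrite scale0r; apply: Rspan0.
exact/RspanZ/triv_rel_B.
Qed.

Lemma tensor_short_exact :
  sq_short_exact top (triv_tensor_bot (@paug R n) (@pmul2 R delta n) top bot)
    all (tensor_bot (X :\ x)) all (tensor_bot X) (@sum_map R n) id.
Proof.
split.
- split => // _ [u [t [[[_ J1] [_ J2]] [Tt ->]]]].
  exists (sum_map u), (sum_map t); split; first exact: dspanD.
  by split; [apply: triv_rel_sum_map | rewrite linearD].
- by split => // w; apply: tensor_bot_delete.
- move=> v Tv _; exists 0, v; split; first by split; split; apply: dspan0.
  by split; [apply: triv_rel_top | rewrite add0r].
- split=> [v Tv | w _ [u [t [Ju [Tt ->]]]]].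
    exists (sum_map v), 0; split; first exact: sum_top_J.
    by split; [apply: Rspan0 | rewrite addr0].
  exists (split_AB u); split; first exact: sum_top_split.
  exists (sum_map (split_AB u) - u), (- t); split; first exact: J_split_AB.
  by split; [rewrite -scaleN1r; apply: RspanZ | rewrite opprD addrA].
- move=> w _; exists w; split => //; exists 0, 0; split; first exact: dspan0.
  by split; [apply: Rspan0 | rewrite subrr addr0].
Qed.

End Proposition46.

Theorem proposition4p6 (R : comPzRingType) (delta : R) (n : nat)
  (X : {set 'I_n}) (x : 'I_n) :
  (2 <= n)%N -> x \in X ->
  [/\ (* A_x, B_{X,x}, J_X, J_{X-x} are left ideals of P_n *)
      [/\ is_left_submodule (@pmul R delta n) (@Amod R n x),
          is_left_submodule (@pmul R delta n) (@Bmod R n X x),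
          is_left_submodule (@pmul R delta n) (@Jmod R n X)
        & is_left_submodule (@pmul R delta n) (@Jmod R n (X :\ x))],
      (* 0 -> A_{X,x} (+) B_{X,x} -> P_n/J_{X-x} -> P_n/J_X -> 0 is exact *)
      sq_short_exact (@sum_top R n X x) (@sum_bot R n X x)
                     (@all_palg R n) (@Jmod R n (X :\ x))
                     (@all_palg R n) (@Jmod R n X)
                     (@sum_map R n) id
    & (* after applying 1 (x)_{P_n} - : exact, leftmost map injective *)
      sq_short_exact
        (@sum_top R n X x)
        (triv_tensor_bot (@paug R n) (@pmul2 R delta n)
                         (@sum_top R n X x) (@sum_bot R n X x))
        (@all_palg R n)
        (triv_tensor_bot (@paug R n) (@pmul R delta n)
                         (@all_palg R n) (@Jmod R n (X :\ x)))
        (@all_palg R n)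
        (triv_tensor_bot (@paug R n) (@pmul R delta n)
                         (@all_palg R n) (@Jmod R n X))
        (@sum_map R n) id].
Proof.
move=> n_gt1 xX; split.
- exact: diagram_left_ideals.
- exact: quotient_short_exact.
- exact: tensor_short_exact.
Qed.
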